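(* For every prime $p$, $\mathscr{U}(p)\supset\mathscr{A}(p)$.
   Context: Let $p$ be a prime. For an integer $r\ge 2$ let $x_1,\ldots,x_r$ be independent indeterminates over $\mathbb{F}_p$ and $f(x)=(x-x_1)\cdots(x-x_r)$. For integers $e\ge0$, $0\le d\le p$ write $f(x)^e=\sum_{i\ge0}c_ix^i$ ($c_i=0$ for $i<0$) and let $M_d(f(x)^e)$ be the $d\times d$ matrix with $(i,j)$ entry $c_{ip+j-d-1}$. Put $\delta(x_1,\ldots,x_r)=\prod_{1\le i<j\le r}(x_i-x_j)$. $\mathscr{A}(p)$ is the set of integer triples $(r,e,d)$ with $r\ge2$, $e\ge1$, $1\le d\le p$, such that $\det M_d(f(x)^e)=\varepsilon\,\delta(x_1,\ldots,x_r)^g$ for some $\varepsilon\in\mathbb{F}_p^{\times}$ and positive integer $g$. For integer triples put $g=g(r,e,d)=\left\{red-\frac{d(d+1)}{2}(p-1)\right\}\big/\frac{r(r-1)}{2}\in\mathbb{Q}$. $\mathscr{U}(p)$ is the set of integer triples $(r,e,d)$ with $r\ge2$, $e\ge1$, $1\le d\le p$, $d(p-1)\le re\le r(p-1)$, $g>0$, and $g\in2\mathbb{Z}$ if $p\ne2$, $g\in\mathbb{Z}$ if $p=2$. *)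

From HB Require Import structures.
From mathcomp Require Import all_boot all_order all_algebra.
From mathcomp Require Import mpoly.
Set Implicit Arguments. Unset Strict Implicit. Unset Printing Implicit Defensive.
Import Order.TTheory GRing.Theory Num.Theory.
Local Open Scope ring_scope.

Definition fpoly (p r : nat) : {poly {mpoly 'F_p[r]}} :=
  \prod_(i < r) ('X - ('X_i)%:P).

(* M_d(f^e): d x d matrix, (i,j) entry (1-based) c_{ip+j-d-1}, c_k = 0 for k<0.
   With 0-based i j : 'I_d, index = (i+1)p + (j+1) - d - 1 = (i+1)p + j - d. *)
Definition Mmat (p r e d : nat) : 'M[{mpoly 'F_p[r]}]_d :=
  \matrix_(i < d, j < d)
    (if (d <= i.+1 * p + j)%N then (fpoly p r ^+ e)`_(i.+1 * p + j - d)%N else 0).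

Definition delta (p r : nat) : {mpoly 'F_p[r]} :=
  \prod_(i < r) \prod_(j < r | (i < j)%N) ('X_i - 'X_j).

Definition inA (p r e d : nat) : Prop :=
  [/\ (2 <= r)%N, (1 <= e)%N, (1 <= d <= p)%N &
   exists (eps : 'F_p) (g : nat), [/\ eps != 0, (0 < g)%N &
     \det (Mmat p r e d) = eps%:MP * delta p r ^+ g]].

Definition gval (p r e d : nat) : rat :=
  ((r * e * d)%:R - (d * d.+1)%:R / 2 * (p.-1)%:R) / ((r * r.-1)%:R / 2).

Definition inU (p r e d : nat) : Prop :=
  [/\ [&& (2 <= r)%N, (1 <= e)%N & (1 <= d <= p)%N],
      (d * p.-1 <= r * e <= r * p.-1)%N, 0 < gval p r e d &
      if p != 2%N then exists k : int, gval p r e d = (2 * k)%:~R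
      else exists k : int, gval p r e d = k%:~R].

From mathcomp Require Import all_boot all_order all_algebra perm.
From mathcomp Require Import mpoly.
From mathcomp Require Import zify ring.
Set Implicit Arguments. Unset Strict Implicit. Unset Printing Implicit Defensive.
Import Order.TTheory GRing.Theory Num.Theory.
Local Open Scope ring_scope.

(* Every entry of M_d(f^e) is a coefficient of f^e, and f^e is homogeneous of
   degree re in (x, x_1, ..., x_r); hence det M_d(f^e) is homogeneous, and
   comparing its degree with that of delta^g, namely g r(r-1)/2, yields the
   formula defining g. The inequalities come from vanishing rows: the last row
   vanishes when re < d(p-1); if e >= p, the substitution x_1 = 0 makes x^e
   divide f^e and kills the first row, whereas delta^g survives it. For odd p,
   swapping x_1 and x_2 fixes f, hence det M_d(f^e), but negates delta, so g is
   even. *)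

Section PolyDhomog.
Variables (R : comNzRingType) (n : nat).
Implicit Types (P Q : {poly {mpoly R[n]}}) (c : {mpoly R[n]}).

(* [P = \sum_i P_i X^i] is homogeneous of total degree [k] in [X] and the [x_i]. *)
Definition poly_dhomog k P :=
  (size P <= k.+1)%N /\ forall i, P`_i \is (k - i)%N.-homog.

Lemma poly_dhomog1 : poly_dhomog 0 1.
Proof.
split; first by rewrite size_poly1.
by case=> [|i]; rewrite coef1 /= ?dhomog1 ?rpred0.
Qed.

Lemma poly_dhomog_XsubC c : c \is 1%N.-homog -> poly_dhomog 1 ('X - c%:P).
Proof.
move=> hc; split; first by rewrite size_XsubC.
case=> [|[|i]]; rewrite coefB coefX coefC /=.
- by rewrite sub0r rpredN.
- by rewrite subr0 dhomog1.
- by rewrite subr0 rpred0.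
Qed.

Lemma poly_dhomogM k l P Q :
  poly_dhomog k P -> poly_dhomog l Q -> poly_dhomog (k + l) (P * Q).
Proof.
move=> [sP hP] [sQ hQ]; split.
  by apply: leq_trans (size_polyMleq P Q) _; rewrite -subn1; lia.
move=> i; rewrite coefM; apply: rpred_sum => j _.
have [jk|kj] := leqP j k; last first.
  by rewrite nth_default ?mul0r ?rpred0 //; apply: leq_trans sP kj.
have [il|li] := leqP (i - j) l; last first.
  by rewrite [Q`__]nth_default ?mulr0 ?rpred0 //; apply: leq_trans sQ li.
have -> : (k + l - i = k - j + (l - (i - j)))%N by have := ltn_ord j; lia.
exact: dhomogM.
Qed.

Lemma poly_dhomogXn k P e : poly_dhomog k P -> poly_dhomog (k * e) (P ^+ e).
Proof.
move=> hP; elim: e => [|e IH]; first by rewrite expr0 muln0; exact: poly_dhomog1.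
by rewrite exprS mulnS; apply: poly_dhomogM.
Qed.

Lemma poly_dhomog_prod_XsubC (a : 'I_n -> {mpoly R[n]}) :
  (forall i, a i \is 1%N.-homog) -> poly_dhomog n (\prod_(i < n) ('X - (a i)%:P)).
Proof.
move=> ha; rewrite -[X in poly_dhomog X](card_ord n) -sum1_card.
elim/big_rec2: _ => [|i k P _ hP]; first exact: poly_dhomog1.
exact/poly_dhomogM/hP/poly_dhomog_XsubC.
Qed.

End PolyDhomog.

Lemma mpolyXU_dhomog (R : nzRingType) n (i : 'I_n) :
  ('X_i : {mpoly R[n]}) \is 1%N.-homog.
Proof. by rewrite dhomogX; apply/eqP; exact: mdeg1. Qed.

Lemma fpoly_exp_dhomog p r e : poly_dhomog (r * e) (fpoly p r ^+ e).
Proof. exact/poly_dhomogXn/poly_dhomog_prod_XsubC/mpolyXU_dhomog. Qed.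

Lemma prod_neq0_factor (R : comPzSemiRingType) (I : finType) (F : I -> R) i :
  \prod_j F j != 0 -> F i != 0.
Proof. by apply: contraNneq => Fi0; rewrite (bigD1 i) //= Fi0 mul0r. Qed.

Section DetDhomog.
Variables (R : comNzRingType) (n d c : nat) (A : 'M[{mpoly R[n]}]_d).
Variables (a b : 'I_d -> nat).
Hypothesis A_weight : forall i j, A i j != 0 -> (a i + b j <= c)%N.
Hypothesis A_dhomog : forall i j, A i j \is (c - (a i + b j))%N.-homog.

Lemma sum_weight_perm (s : 'S_d) :
  (\sum_(i < d) (a i + b (s i)) = \sum_(i < d) a i + \sum_(j < d) b j)%N.
Proof. by rewrite big_split /=; congr (_ + _)%N; apply/esym/reindex_inj/perm_inj. Qed.

Let sum_const_ord : (\sum_(i < d) c = d * c)%N.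
Proof. by rewrite big_const_ord iter_addn_0 mulnC. Qed.

Lemma det_dhomog :
  \det A \is (d * c - (\sum_(i < d) a i + \sum_(j < d) b j))%N.-homog.
Proof.
apply: rpred_sum => s _.
have [->|nz_s] := eqVneq (\prod_i A i (s i)) 0; first by rewrite mulr0 rpred0.
have nzA i : A i (s i) != 0 := prod_neq0_factor i nz_s.
have sign_dhomog : (-1 : {mpoly R[n]}) ^+ s \is 0%N.-homog.
  have m1 : (-1 : {mpoly R[n]}) \is 0%N.-homog by rewrite rpredN dhomog1.
  by have := dhomogMn s m1; rewrite mul0n.
have prod_dhomog : \prod_i A i (s i) \is (\sum_i (c - (a i + b (s i)))).-homog.
  elim/big_rec2: _ => [|i k P _ hP]; first exact: dhomog1.
  exact: dhomogM.
have -> : (d * c - (\sum_i a i + \sum_j b j) =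
           0 + \sum_(i < d) (c - (a i + b (s i))))%N.
  rewrite add0n -(sum_weight_perm s) -sum_const_ord.
  apply/eqP; rewrite -(eqn_add2r (\sum_i (a i + b (s i)))) -big_split /=.
  rewrite subnK; last by apply: leq_sum => i _; exact: A_weight.
  by apply/eqP/eq_bigr => i _; rewrite subnK ?A_weight.
exact: dhomogM.
Qed.

Lemma det_neq0_weight_le :
  \det A != 0 -> (\sum_(i < d) a i + \sum_(j < d) b j <= d * c)%N.
Proof.
move=> nzA; have [s nz_s] : exists s : 'S_d, \prod_i A i (s i) != 0.
  apply/existsP; apply: contraR nzA; rewrite negb_exists => /forallP zA.
  by apply/eqP/big1 => s _; move/negbNE/eqP: (zA s) ->; rewrite mulr0.
rewrite -(sum_weight_perm s) -sum_const_ord.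
by apply: leq_sum => i _; apply/A_weight/(prod_neq0_factor i nz_s).
Qed.

End DetDhomog.

Lemma mul2_bin2 n : (2 * 'C(n, 2) = n * n.-1)%N.
Proof. by rewrite -[2%N]/(1.+1) -mul_bin_diag bin1. Qed.

Lemma sum_ord_id n : (\sum_(i < n) i = 'C(n, 2))%N.
Proof. by rewrite -bin2_sum big_mkord. Qed.

Section MmatDegree.
Variables (p r e d : nat).
Local Notation M := (Mmat p r e d).

Lemma Mmat_weight (i j : 'I_d) : M i j != 0 -> (i.+1 * p + j <= r * e + d)%N.
Proof.
rewrite mxE; case: ifP => [le_d|]; last by rewrite eqxx.
have [size_fe _] := fpoly_exp_dhomog p r e.
apply: contraTT; rewrite -ltnNge negbK => lt_w; rewrite nth_default //.
by apply: leq_trans size_fe _; lia.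
Qed.

Lemma Mmat_dhomog (i j : 'I_d) : M i j \is (r * e + d - (i.+1 * p + j))%N.-homog.
Proof.
rewrite mxE; case: ifP => [le_d|_]; last exact: rpred0.
have [_ fe_dhomog] := fpoly_exp_dhomog p r e.
by have := fe_dhomog (i.+1 * p + j - d)%N; congr (_ \is _.-homog); lia.
Qed.

Lemma sum_Mmat_weights :
  (\sum_(i < d) i.+1 * p + \sum_(j < d) j = p * 'C(d.+1, 2) + 'C(d, 2))%N.
Proof.
rewrite -!sum_ord_id big_ord_recl /= add0n big_distrr /=.
by congr (_ + _)%N; apply: eq_bigr => i _; rewrite mulnC.
Qed.

Lemma det_Mmat_dhomog :
  \det M \is (d * (r * e + d) - (p * 'C(d.+1, 2) + 'C(d, 2)))%N.-homog.
Proof. by rewrite -sum_Mmat_weights; exact: det_dhomog Mmat_weight Mmat_dhomog. Qed.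

Lemma det_Mmat_degree D : (0 < p)%N ->
  \det M != 0 -> \det M \is D.-homog -> (2 * D + d * d.+1 * p.-1 = 2 * (r * e * d))%N.
Proof.
move=> p_gt0 nzM M_dhomog.
have := det_neq0_weight_le Mmat_weight nzM; rewrite sum_Mmat_weights => le_w.
rewrite (dhomog_uniq nzM M_dhomog det_Mmat_dhomog).
have := mul2_bin2 d.+1; have := mul2_bin2 d.
by rewrite -(prednK p_gt0) in le_w *; case: d le_w => [|d'] /=; nia.
Qed.

End MmatDegree.

Lemma sum_ord_pairs r : (\sum_(i < r) \sum_(j < r | i < j) 1 = 'C(r, 2))%N.
Proof.
elim: r => [|r IH]; first by rewrite big_ord0.
rewrite big_ord_recr /= [X in (_ + X)%N]big_pred0 => [|j]; last first.
  by rewrite ltnNge -ltnS ltn_ord.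
rewrite addn0 binS bin1 -IH -[X in (_ + X)%N](card_ord r) -sum1_card -big_split /=.
apply: eq_bigr => i _; rewrite [LHS]big_mkcond big_ord_recr /= -big_mkcond /=.
by rewrite ltn_ord.
Qed.

Lemma delta_dhomog p r : delta p r \is 'C(r, 2).-homog.
Proof.
rewrite /delta -(sum_ord_pairs r).
elim/big_rec2: _ => [|i k P _ hP]; first exact: dhomog1.
apply: dhomogM hP; elim/big_rec2: _ => [|j l Q _ hQ]; first exact: dhomog1.
by apply: dhomogM hQ; rewrite rpredB ?mpolyXU_dhomog.
Qed.

Lemma mpolyXU_inj (R : nzRingType) n :
  injective (fun i : 'I_n => ('X_i : {mpoly R[n]})).
Proof.
move=> i j /(congr1 (mcoeff U_(i))); rewrite !mcoeffXU eqxx eq_sym.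
by case: eqP => // _ /eqP; rewrite oner_eq0.
Qed.

Lemma mpolyXU_neq0 (R : nzRingType) n (i : 'I_n) : ('X_i : {mpoly R[n]}) != 0.
Proof.
apply/eqP => /(congr1 (mcoeff U_(i))).
by rewrite mcoeffXU eqxx mcoeff0 => /eqP; rewrite oner_eq0.
Qed.

Lemma rmorph_delta_neq0 p r (S : idomainType)
    (phi : {rmorphism {mpoly 'F_p[r]} -> S}) :
  (forall i j : 'I_r, (i < j)%N -> phi 'X_i != phi 'X_j) -> phi (delta p r) != 0.
Proof.
move=> phiX_neq; rewrite !rmorph_prod; apply/prodf_neq0 => i _.
rewrite rmorph_prod; apply/prodf_neq0 => j lt_ij.
by rewrite rmorphB subr_eq0 phiX_neq.
Qed.

Lemma delta_neq0 p r : delta p r != 0.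
Proof.
apply: (@rmorph_delta_neq0 _ _ _ idfun) => i j lt_ij.
by apply/eqP => /= /mpolyXU_inj eq_ij; rewrite eq_ij ltnn in lt_ij.
Qed.

Lemma det_row_eq0 (R : comNzRingType) n (A : 'M[R]_n) (i0 : 'I_n) :
  (forall j, A i0 j = 0) -> \det A = 0.
Proof.
by move=> A_i0; rewrite (expand_det_row _ i0) big1 // => j _; rewrite A_i0 mul0r.
Qed.

Lemma det_Mmat_eq0 p r e d :
  (0 < d)%N -> (r * e < d * p.-1)%N -> \det (Mmat p r e d) = 0.
Proof.
move=> d_gt0 lt_re; have lt_d : (d.-1 < d)%N by rewrite ltn_predL.
apply: (det_row_eq0 (i0 := Ordinal lt_d)) => j.
rewrite mxE; case: ifP => // _; rewrite nth_default //.
have [size_fe _] := fpoly_exp_dhomog p r e.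
by apply: leq_trans size_fe _; rewrite /= prednK //; case: p lt_re => [|p'] /=; nia.
Qed.

Section RmorphMmat.
Variables (p r e d : nat) (S : comNzRingType).
Variable phi : {rmorphism {mpoly 'F_p[r]} -> S}.

Lemma map_Mmat (i j : 'I_d) : map_mx phi (Mmat p r e d) i j =
  if (d <= i.+1 * p + j)%N
  then ((map_poly phi (fpoly p r)) ^+ e)`_(i.+1 * p + j - d) else 0.
Proof. by rewrite !mxE; case: ifP => _; rewrite ?rmorph0 // -rmorphXn coef_map. Qed.

Lemma rmorph_det_Mmat_eq0 (i0 : 'I_r) :
  phi 'X_i0 = 0 -> (0 < d)%N -> (p <= e)%N -> phi (\det (Mmat p r e d)) = 0.
Proof.
move=> phiX0 d_gt0 le_pe; rewrite -det_map_mx.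
apply: (det_row_eq0 (i0 := Ordinal d_gt0)) => j; rewrite map_Mmat.
case: ifP => // le_d; rewrite /fpoly map_prod_XsubC (bigD1 i0) //= phiX0 subr0.
by rewrite exprMn coefXnM ifT //; have := ltn_ord j; rewrite /= mul1n in le_d *; lia.
Qed.

End RmorphMmat.

Lemma rmorph_det_Mmat_id p r e d
    (phi : {rmorphism {mpoly 'F_p[r]} -> {mpoly 'F_p[r]}}) :
  map_poly phi (fpoly p r) = fpoly p r ->
  phi (\det (Mmat p r e d)) = \det (Mmat p r e d).
Proof.
move=> phi_f; rewrite -det_map_mx; congr (\det _); apply/matrixP => i j.
by rewrite map_Mmat phi_f mxE.
Qed.

Lemma msymXU (R : comNzRingType) n (s : 'S_n) (i : 'I_n) :
  msym s ('X_i : {mpoly R[n]}) = 'X_(s i).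
Proof.
by rewrite /msym mmapX (mmap1U (fun k : 'I_n => ('X_(s k) : {mpoly R[n]}))).
Qed.

Lemma msymC (R : comNzRingType) n (s : 'S_n) (c : R) :
  msym s c%:MP = c%:MP :> {mpoly R[n]}.
Proof. by rewrite /msym mmapC. Qed.

Lemma map_poly_msym_fpoly p r (s : 'S_r) : map_poly (msym s) (fpoly p r) = fpoly p r.
Proof.
rewrite /fpoly map_prod_XsubC.
transitivity (\prod_(i < r) ('X - ('X_(s i) : {mpoly 'F_p[r]})%:P)).
  by apply: eq_bigr => i _; rewrite /= msymXU.
by apply/esym/reindex_inj/perm_inj.
Qed.

Lemma msym_delta_tperm p r (i0 i1 : 'I_r) : val i0 = 0%N -> val i1 = 1%N ->
  msym (tperm i0 i1) (delta p r) = - delta p r.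
Proof.
move=> h0 h1; set s := tperm i0 i1.
have s_fix (j : 'I_r) : (1 < j)%N -> s j = j.
  by move=> lt1j; rewrite tpermD // -(inj_eq val_inj) ?h0 ?h1;
    apply: contraTneq lt1j => <-.
pose T (k : 'I_r) := \prod_(j < r | (1 < j)%N) ('X_k - 'X_j : {mpoly 'F_p[r]}).
pose B := \prod_(i < r | (1 < i)%N)
  \prod_(j < r | (i < j)%N) ('X_i - 'X_j : {mpoly 'F_p[r]}).
have T_sym k : msym s (T k) = T (s k).
  rewrite /T rmorph_prod; apply: eq_bigr => j lt1j.
  by rewrite rmorphB /= !msymXU (s_fix j).
have B_sym : msym s B = B.
  rewrite /B rmorph_prod; apply: eq_bigr => i lt1i; rewrite rmorph_prod.
  apply: eq_bigr => j lt_ij.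
  by rewrite rmorphB /= !msymXU (s_fix i) ?(s_fix j) // (ltn_trans lt1i).
have gt1 (k : 'I_r) : (k != i0) && (k != i1) = (1 < k)%N.
  by rewrite -!(inj_eq val_inj) h0 h1; case: k => [[|[|k]] ?].
have delta_split : delta p r = ('X_i0 - 'X_i1) * T i0 * T i1 * B.
  rewrite /delta (bigD1 i0) //= [X in _ * X](bigD1 i1) /=; last first.
    by rewrite -(inj_eq val_inj) h0 h1.
  rewrite (eq_bigl _ _ (fun k => gt1 k)) (bigD1 i1) /=; last by rewrite h0 h1.
  rewrite (eq_bigl (fun j : 'I_r => (1 < j)%N)) => [|j]; last first.
    by rewrite -(inj_eq val_inj) h0 h1; case: j => [[|[|k]] ?].
  rewrite [X in _ * (X * _)](eq_bigl (fun j : 'I_r => (1 < j)%N)) => [|j]; last first.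
    by rewrite h1.
  by rewrite /T /B !mulrA.
rewrite delta_split !rmorphM /= B_sym !T_sym rmorphB /= !msymXU tpermL tpermR.
ring.
Qed.

Lemma det_Mmat_delta_exp_lt p r e d (eps : 'F_p) g :
  (0 < r)%N -> (0 < d)%N -> eps != 0 ->
  \det (Mmat p r e d) = eps%:MP * delta p r ^+ g -> (e < p)%N.
Proof.
move=> r_gt0 d_gt0 eps_neq0 detE; rewrite ltnNge; apply/negP => le_pe.
pose i0 : 'I_r := Ordinal r_gt0.
pose phi : {rmorphism {mpoly 'F_p[r]} -> {mpoly 'F_p[r]}} :=
  comp_mpoly [tuple if i == i0 then 0 else 'X_i | i < r].
have phiX i : phi 'X_i = if i == i0 then 0 else 'X_i.
  by rewrite /phi /= comp_mpolyXU -tnth_nth tnth_mktuple.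
have phiX0 : phi 'X_i0 = 0 by rewrite phiX eqxx.
have := rmorph_det_Mmat_eq0 phiX0 d_gt0 le_pe.
rewrite detE rmorphM rmorphXn /= comp_mpolyC => /eqP.
rewrite mulf_eq0 mpolyC_eq0 (negbTE eps_neq0) expf_eq0 => /andP[_]; apply/negP.
apply: rmorph_delta_neq0 => i j lt_ij; rewrite !phiX.
have -> : (j == i0) = false.
  by apply/negbTE; rewrite -(inj_eq val_inj) -lt0n (leq_ltn_trans _ lt_ij).
case: ifP => _; last by apply/eqP => /mpolyXU_inj eq_ij; rewrite eq_ij ltnn in lt_ij.
by rewrite eq_sym mpolyXU_neq0.
Qed.

Lemma det_Mmat_delta_exp_even p r e d (eps : 'F_p) g :
  prime p -> p != 2%N -> (2 <= r)%N -> eps != 0 ->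
  \det (Mmat p r e d) = eps%:MP * delta p r ^+ g -> ~~ odd g.
Proof.
move=> p_pr p_neq2 r_ge2 eps_neq0 detE; apply/negP => odd_g.
pose s := tperm (Ordinal (ltnW r_ge2)) (Ordinal r_ge2).
have := rmorph_det_Mmat_id e d (map_poly_msym_fpoly p s).
have delta_anti : msym s (delta p r) = - delta p r by apply: msym_delta_tperm.
rewrite detE rmorphM rmorphXn /= delta_anti (msymC s eps).
rewrite exprNn -signr_odd odd_g expr1 mulN1r mulrN => /eqP.
set x := _ * _.
have x_neq0 : x != 0 by rewrite mulf_neq0 ?mpolyC_eq0 ?expf_neq0 ?delta_neq0.
rewrite eq_sym -subr_eq0 opprK -mulr2n -mulr_natl mulf_eq0 (negbTE x_neq0) orbF.
rewrite -(rmorph_nat (@mpolyC r 'F_p)) mpolyC_eq0 -(dvdn_pcharf (pchar_Fp p_pr)).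
by move/(dvdn_leq (isT : 0 < 2)%N); have := prime_gt1 p_pr; move/eqP: p_neq2; lia.
Qed.

Lemma gvalE p r e d g : (2 <= r)%N ->
  (r * r.-1 * g + d * d.+1 * p.-1 = 2 * (r * e * d))%N -> gval p r e d = g%:R.
Proof.
move=> r_ge2 degE.
have red : (r * e * d)%N%:R =
    ((r * r.-1 * g)%N%:R + (d * d.+1 * p.-1)%N%:R) / 2 :> rat.
  by rewrite -natrD degE natrM; field.
have r_neq0 : r%:R != 0 :> rat by rewrite pnatr_eq0 -lt0n ltnW.
have r1_neq0 : r.-1%:R != 0 :> rat by rewrite pnatr_eq0 -lt0n -ltnS prednK // ltnW.
rewrite /gval red [(r * r.-1 * g)%N]mulnC natrM.
by field; rewrite r_neq0 r1_neq0.
Qed.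

Theorem lemma4 (p : nat) : prime p ->
  forall r e d : nat, inA p r e d -> inU p r e d.
Proof.
move=> p_pr r e d [r_ge2 e_ge1 /andP[d_ge1 le_dp] [eps [g [eps_neq0 g_gt0 detE]]]].
have det_neq0 : \det (Mmat p r e d) != 0.
  by rewrite detE mulf_neq0 ?mpolyC_eq0 ?expf_neq0 ?delta_neq0.
have det_dhomog : \det (Mmat p r e d) \is ('C(r, 2) * g)%N.-homog.
  by rewrite detE mul_mpolyC rpredZ // dhomogMn // delta_dhomog.
have gE : gval p r e d = g%:R.
  apply: gvalE r_ge2 _.
  by rewrite -mul2_bin2 -mulnA (det_Mmat_degree (prime_gt0 p_pr) det_neq0 det_dhomog).
have lt_ep := det_Mmat_delta_exp_lt (ltnW r_ge2) d_ge1 eps_neq0 detE.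
have le_dre : (d * p.-1 <= r * e)%N.
  by rewrite leqNgt; apply: contra det_neq0 => /(det_Mmat_eq0 d_ge1) ->.
split.
- by rewrite r_ge2 e_ge1 d_ge1 le_dp.
- by rewrite le_dre leq_mul // -ltnS prednK ?prime_gt0.
- by rewrite gE ltr0n.
- rewrite gE; case: ifP => [p_neq2|_]; last by exists g%:Z.
  have even_g := det_Mmat_delta_exp_even p_pr p_neq2 r_ge2 eps_neq0 detE.
  exists (g./2)%:Z; rewrite -[in LHS](odd_double_half g) (negbTE even_g) add0n.
  by rewrite -mul2n -PoszM.
Qed.
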